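(* In the setting below, for every $m\in\mathbb N$ with $1\le m\le nN$, $$\mathbb P(X_m\ge1)\ge\min\Big\{\frac{m}{2N},\frac{1}{2C_G}\Big\}\,\mathbb P(X_{\ell N}\ge1),$$ and for all $k,m\in\mathbb N$ with $2kN\le m\le nN$, $$\mathbb P(X_m\ge k)\ge\frac{\mathbb P(X_{\ell N}\ge k)}{2+4C_G}.$$
   Context: Let $n,N\in\mathbb N$, $I=\{1,\dots,n\}$, $J=\{1,\dots,N\}$, $G$ a nonempty finite set of maps $I\to J$, $\mathbb P$ the normalized counting measure on $G$ ($\mathbb P(E)=|E|/|G|$) and $\mathbb E$ its expectation. Assume there is a constant $C_G\ge1$ such that for all $i\in I,j\in J$, $\mathbb P(g(i)=j)=1/N$, and for all pairs $(i_1,j_1)\ne(i_2,j_2)$ in $I\times J$, $\mathbb P(g(i_1)=j_1,g(i_2)=j_2)\le C_G/N^2$. Fix an integer $1\le\ell\le n$ and a matrix $a\in\mathbb R^{n\times N}$ with non-negative entries, and let $h:\{1,\dots,nN\}\to I\times J$ be a bijection with $a(h(j))\ge a(h(j+1))$ for $1\le j<\ell N$ and $a(h(j))=0$ for $\ell N<j\le nN$ (here $a(i,j)=a_{ij}$). Identify each $g\in G$ with its graph $\{(i,g(i)):i\in I\}$. For $1\le j\le nN$ let $Y_j(g)=1$ if $h(j)\in g$ and $Y_j(g)=0$ otherwise, and for $1\le m\le nN$ let $X_m(g)=\sum_{j=1}^mY_j(g)=|h(\{1,\dots,m\})\cap g|$. *)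

From HB Require Import structures.
From mathcomp Require Import all_boot all_order all_algebra.
Set Implicit Arguments. Unset Strict Implicit. Unset Printing Implicit Defensive.
Import Order.TTheory GRing.Theory Num.Theory.
Local Open Scope ring_scope.

Definition Prob (R : numFieldType) (n N : nat)
  (G : {set {ffun 'I_n -> 'I_N}}) (E : pred {ffun 'I_n -> 'I_N}) : R :=
  (#|[set g in G | E g]|)%:R / (#|G|)%:R.

(* X_m(g) = |h({1..m}) ∩ graph g|; the index j of the paper (1-based)
   corresponds to the ordinal j-1 here, so h({1..m}) = h({k | k < m}). *)
Definition Xcount (n N : nat) (h : 'I_(n * N) -> 'I_n * 'I_N) (m : nat)
  (g : {ffun 'I_n -> 'I_N}) : nat :=
  #|[set k : 'I_(n * N) | (k < m)%N && (g (h k).1 == (h k).2)]|.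

(* Second-moment method.  Pairwise near-independence of the events
   g (h k).1 = (h k).2 gives E[X_m] = m/N and E[X_m^2] <= m/N + C_G (m/N)^2,
   and Cauchy-Schwarz on the event {X_m >= t} gives the Paley-Zygmund bound
   (E[X_m] - (t-1))^2 <= E[X_m^2] P(X_m >= t).  Both inequalities then hold
   even with P(X_(lN) >= k) replaced by 1. *)

From HB Require Import structures.
From mathcomp Require Import all_boot all_order all_algebra.
From mathcomp Require Import ring lra zify.
Import Order.TTheory GRing.Theory Num.Theory.
Set Implicit Arguments.
Unset Strict Implicit.
Unset Printing Implicit Defensive.
Local Open Scope ring_scope.

Lemma sum_mul_sqr_le (R : realFieldType) (I : finType) (P : pred I) (u v : I -> R) :
  (\sum_(i | P i) u i * v i) ^+ 2 <=
    (\sum_(i | P i) u i ^+ 2) * (\sum_(i | P i) v i ^+ 2).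
Proof.
set A := \sum_(i | P i) u i ^+ 2; set B := \sum_(i | P i) v i ^+ 2.
set S := \sum_(i | P i) u i * v i.
have lagrange : \sum_(i | P i) \sum_(j | P j) (u i * v j - u j * v i) ^+ 2 =
    A * B + B * A - 2 * S ^+ 2.
  have expand i j : (u i * v j - u j * v i) ^+ 2 =
      u i ^+ 2 * v j ^+ 2 + v i ^+ 2 * u j ^+ 2 - 2 * ((u i * v i) * (u j * v j)).
    by ring.
  under eq_bigr do under eq_bigr do rewrite expand.
  rewrite /A /B /S expr2 !big_distrlr mulr_sumr -!big_split -sumrB /=.
  apply: eq_bigr => i _; rewrite mulr_sumr -!big_split -sumrB /=.
  by apply: eq_bigr => j _; rewrite mulrA.
have : 0 <= \sum_(i | P i) \sum_(j | P j) (u i * v j - u j * v i) ^+ 2.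
  by do 2!apply: sumr_ge0 => ? _; apply: sqr_ge0.
rewrite lagrange; lra.
Qed.

Section Mean.
Variables (R : realFieldType) (T : finType) (G : {set T}).

Definition mean (f : T -> R) : R := (\sum_(g in G) f g) / #|G|%:R.

Lemma mean_sum (I : finType) (P : pred I) (F : I -> T -> R) :
  mean (fun g => \sum_(i | P i) F i g) = \sum_(i | P i) mean (F i).
Proof. by rewrite /mean exchange_big mulr_suml. Qed.

Lemma eq_mean (f1 f2 : T -> R) : f1 =1 f2 -> mean f1 = mean f2.
Proof. by move=> eq12; rewrite /mean (eq_bigr _ (fun g _ => eq12 g)). Qed.

Lemma meanD (f1 f2 : T -> R) : mean (f1 \+ f2) = mean f1 + mean f2.
Proof. by rewrite /mean big_split mulrDl. Qed.

Lemma mean_le (f1 f2 : T -> R) :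
  (forall g, g \in G -> f1 g <= f2 g) -> mean f1 <= mean f2.
Proof. by move=> le12; rewrite ler_wpM2r ?invr_ge0 ?ler0n ?ler_sum. Qed.

Lemma mean_ge0 (f : T -> R) : (forall g, g \in G -> 0 <= f g) -> 0 <= mean f.
Proof. by move=> f_ge0; rewrite divr_ge0 ?ler0n ?sumr_ge0. Qed.

Lemma mean_mul_sqr_le (f1 f2 : T -> R) :
  mean (f1 \* f2) ^+ 2 <= mean (fun g => f1 g ^+ 2) * mean (fun g => f2 g ^+ 2).
Proof.
rewrite /mean mulrACA -!expr2 !expr_div_n -exprVn.
by apply: ler_wpM2r; [rewrite exprn_ge0 ?invr_ge0 | exact: sum_mul_sqr_le].
Qed.

Hypothesis G_neq0 : G != set0.

Lemma mean_cst (c : R) : mean (fun=> c) = c.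
Proof.
by rewrite /mean sumr_const -[c *+ _]mulr_natr mulfK // pnatr_eq0 -lt0n card_gt0.
Qed.

Lemma paley_zygmund (X : T -> nat) t : (0 < t)%N ->
  (t.-1)%:R <= mean (fun g => (X g)%:R) ->
  (mean (fun g => (X g)%:R) - (t.-1)%:R) ^+ 2 <=
    mean (fun g => (X g)%:R ^+ 2) * mean (fun g => ((t <= X g)%N)%:R).
Proof.
move=> t_gt0 mean_ge; set ind := fun g => ((t <= X g)%N)%:R : R.
have le_truncated g : (X g)%:R <= ind g * (X g)%:R + (t.-1)%:R.
  by rewrite /ind; case: leqP => Xt; rewrite ?mul1r ?lerDl // mul0r add0r ler_nat; lia.
have ind_sqr g : ind g ^+ 2 = ind g by rewrite /ind; case: leqP; rewrite ?expr1n ?expr0n.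
have trunc : mean (fun g => (X g)%:R) - (t.-1)%:R <= mean (ind \* (fun g => (X g)%:R)).
  by rewrite lerBlDr -[X in _ + X](mean_cst) -meanD; apply: mean_le.
apply: le_trans (_ : mean (ind \* (fun g => (X g)%:R)) ^+ 2 <= _).
  by rewrite lerXn2r // nnegrE; lra.
rewrite -[mean ind](@eq_mean (fun g => ind g ^+ 2)) //.
by rewrite mulrC; apply: mean_mul_sqr_le.
Qed.

End Mean.

Lemma ProbE {R : realFieldType} n N (G : {set {ffun 'I_n -> 'I_N}}) P :
  Prob R G P = mean G (fun g => (P g)%:R).
Proof.
rewrite /Prob /mean -sum1_card natr_sum big_mkcond [in RHS]big_mkcond /=.
by congr (_ / _); apply: eq_bigr => g _; rewrite inE; case: (g \in G); case: (P g).
Qed.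

Lemma Prob_le1 {R : realFieldType} n N (G : {set {ffun 'I_n -> 'I_N}}) P :
  G != set0 -> Prob R G P <= 1.
Proof.
move=> G_neq0; rewrite ProbE -[X in _ <= X](mean_cst G_neq0 1).
by apply: mean_le => g _; case: (P g).
Qed.

Lemma sum_ord_lt_const (R : realFieldType) p m (c : R) : (m <= p)%N ->
  \sum_(k < p | (k < m)%N) c = c * m%:R.
Proof.
move=> le_mp; rewrite -(big_mkord (fun k => (k < m)%N) (fun=> c)).
have := big_nat_widen 0 m p xpredT (fun=> c) le_mp => /= <-.
by rewrite sumr_const_nat subn0 mulr_natr.
Qed.

Section XcountMoments.
Variables (R : realFieldType) (n N : nat) (G : {set {ffun 'I_n -> 'I_N}}) (C : R).
Variable h : 'I_(n * N) -> 'I_n * 'I_N.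
Hypotheses (G_neq0 : G != set0) (C_ge0 : 0 <= C) (h_inj : injective h).
Hypothesis hmarg : forall (i : 'I_n) (j : 'I_N),
  Prob R G (fun g => g i == j) = 1 / N%:R.
Hypothesis hpair : forall (i1 i2 : 'I_n) (j1 j2 : 'I_N), (i1, j1) != (i2, j2) ->
  Prob R G (fun g => (g i1 == j1) && (g i2 == j2)) <= C / N%:R ^+ 2.

Local Notation hit k g := ((g (h k).1 == (h k).2)%:R : R).

Lemma Xcount_sum m g : (Xcount h m g)%:R = \sum_(k : 'I_(n * N) | (k < m)%N) hit k g.
Proof.
rewrite /Xcount -sum1_card natr_sum big_mkcond [RHS]big_mkcond /=.
by apply: eq_bigr => k _; rewrite inE; case: (k < m)%N; case: (_ == _).
Qed.

Lemma mean_hit_pair k k' :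
  mean G (fun g => hit k g * hit k' g) <= (k' == k)%:R / N%:R + C / N%:R ^+ 2.
Proof.
have C_div_ge0 : 0 <= C / N%:R ^+ 2 by rewrite divr_ge0 ?exprn_ge0.
under eq_mean do rewrite -natrM mulnb.
case: (eqVneq k' k) => [-> | neq_k].
  under eq_mean do rewrite andbb.
  by rewrite -ProbE hmarg mul1r lerDl.
rewrite mul0r add0r -ProbE hpair // -!surjective_pairing.
by apply: contra neq_k => /eqP /h_inj ->.
Qed.

Lemma mean_Xcount m : (m <= n * N)%N ->
  mean G (fun g => (Xcount h m g)%:R : R) = m%:R / N%:R.
Proof.
move=> le_m; rewrite (eq_mean G (Xcount_sum m)) mean_sum.
under eq_bigr do rewrite -ProbE hmarg.
by rewrite sum_ord_lt_const // mul1r mulrC.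
Qed.

Lemma mean_Xcount_sqr m : (m <= n * N)%N ->
  mean G (fun g => (Xcount h m g)%:R ^+ 2) <= m%:R / N%:R + C * (m%:R / N%:R) ^+ 2.
Proof.
move=> le_m.
under eq_mean do rewrite expr2 Xcount_sum big_distrlr /=.
rewrite mean_sum; under eq_bigr do rewrite mean_sum.
apply: le_trans (_ : \sum_(k : 'I_(n * N) | (k < m)%N)
    \sum_(k' : 'I_(n * N) | (k' < m)%N) ((k' == k)%:R / N%:R + C / N%:R ^+ 2) <= _).
  by do 2!apply: ler_sum => ? _; apply: mean_hit_pair.
apply: le_trans (_ : \sum_(k : 'I_(n * N) | (k < m)%N)
    (1 / N%:R + C / N%:R ^+ 2 * m%:R) <= _).
  apply: ler_sum => k lt_km; rewrite big_split /= sum_ord_lt_const // (bigD1 k) //= eqxx.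
  by rewrite big1 ?addr0 // => k' /andP[_ /negbTE ->]; rewrite mul0r.
by rewrite sum_ord_lt_const // expr_div_n le_eqVlt; apply/orP; left; apply/eqP; ring.
Qed.

Lemma Xcount_tail m t : (m <= n * N)%N -> (0 < t)%N -> (t.-1)%:R <= m%:R / N%:R :> R ->
  (m%:R / N%:R - (t.-1)%:R) ^+ 2 <=
    (m%:R / N%:R + C * (m%:R / N%:R) ^+ 2) * Prob R G (fun g => (t <= Xcount h m g)%N).
Proof.
move=> le_m t_gt0 le_t; rewrite -(mean_Xcount le_m) ProbE.
apply: le_trans (paley_zygmund G_neq0 t_gt0 _) _; first by rewrite mean_Xcount.
by apply: ler_wpM2r; [apply: mean_ge0 | rewrite mean_Xcount // mean_Xcount_sqr].
Qed.

End XcountMoments.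

Lemma min_half_le_of_sqr_le (R : realFieldType) (mu C p : R) :
  0 < mu -> 0 < C -> mu ^+ 2 <= (mu + C * mu ^+ 2) * p ->
  Num.min (mu / 2) (1 / (2 * C)) <= p.
Proof.
move=> mu_gt0 C_gt0 le_sqr.
rewrite (_ : _ * p = mu * ((1 + C * mu) * p)) in le_sqr; last by ring.
have le_mu : mu <= (1 + C * mu) * p by rewrite -(ler_pM2l mu_gt0) -expr2.
have Cmu_gt0 : 0 < C * mu by rewrite mulr_gt0.
have p_gt0 : 0 < p by nra.
rewrite ge_min; case: (leP (C * mu) 1) => [le1 | gt1]; apply/orP.
  by left; nra.
by right; rewrite ler_pdivrMr; nra.
Qed.

Lemma inv_le_of_sqr_le (R : realFieldType) (mu C s p : R) :
  0 <= C -> 2 <= mu -> 0 <= s -> s <= mu / 2 ->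
  (mu - s) ^+ 2 <= (mu + C * mu ^+ 2) * p -> (2 + 4 * C)^-1 <= p.
Proof.
move=> C_ge0 mu_ge2 s_ge0 s_le le_sqr.
have mu_gt0 : 0 < mu by lra.
rewrite (_ : _ * p = mu * ((1 + C * mu) * p)) in le_sqr; last by ring.
have le_mu : mu / 4 <= (1 + C * mu) * p.
  by rewrite -(ler_pM2l mu_gt0); apply: le_trans le_sqr; nra.
have Cmu_ge0 : 0 <= C * mu by rewrite mulr_ge0 // ltW.
have p_gt0 : 0 < p by nra.
rewrite -[_^-1]mul1r ler_pdivrMr; nra.
Qed.

Theorem lemma3p3 (R : realFieldType) (n N : nat)
  (G : {set {ffun 'I_n -> 'I_N}}) (CG : R)
  (hG0 : G != set0)
  (hCG : 1 <= CG)
  (hmarg : forall (i : 'I_n) (j : 'I_N),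
      Prob R G (fun g => g i == j) = 1 / N%:R)
  (hpair : forall (i1 i2 : 'I_n) (j1 j2 : 'I_N), (i1, j1) != (i2, j2) ->
      Prob R G (fun g => (g i1 == j1) && (g i2 == j2)) <= CG / (N%:R ^+ 2))
  (l : nat) (hl1 : (1 <= l)%N) (hln : (l <= n)%N)
  (a : 'M[R]_(n, N)) (ha0 : forall i j, 0 <= a i j)
  (h : 'I_(n * N) -> 'I_n * 'I_N) (hbij : bijective h)
  (hdec : forall (k k' : 'I_(n * N)), (k' = k.+1 :> nat) -> (k.+1 < l * N)%N ->
      a (h k').1 (h k').2 <= a (h k).1 (h k).2)
  (hzero : forall k : 'I_(n * N), (l * N <= k)%N -> a (h k).1 (h k).2 = 0) :
  (forall m : nat, (1 <= m)%N -> (m <= n * N)%N ->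
     Prob R G (fun g => (1 <= Xcount h m g)%N) >=
       Num.min (m%:R / (2 * N%:R)) (1 / (2 * CG)) *
       Prob R G (fun g => (1 <= Xcount h (l * N) g)%N))
  /\
  (forall k m : nat, (2 * k * N <= m)%N -> (m <= n * N)%N ->
     Prob R G (fun g => (k <= Xcount h m g)%N) >=
       Prob R G (fun g => (k <= Xcount h (l * N) g)%N) / (2 + 4 * CG)).
Proof.
have CG_gt0 : 0 < CG by lra.
have N_gt0 : (0 < N)%N.
  by case/set0Pn: hG0 => g _; have := ltn_ord (g (Ordinal (leq_trans hl1 hln))); lia.
have N_gt0R : 0 < N%:R :> R by rewrite ltr0n.
have tail := Xcount_tail hG0 (ltW CG_gt0) (bij_inj hbij) hmarg hpair.
split=> [m m_gt0 le_m | k m le_km le_m].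
  apply: le_trans (ler_piMr _ (Prob_le1 _ hG0)) _.
    by rewrite le_min !divr_ge0 ?mulr_ge0 ?ler0n ?ltW.
  rewrite (_ : m%:R / _ = m%:R / N%:R / 2); last by field; rewrite lt0r_neq0.
  apply: min_half_le_of_sqr_le => //.
    by rewrite divr_gt0 ?ltr0n.
  by have := tail m 1 le_m isT; rewrite /= subr0; apply; rewrite divr_ge0 ?ler0n.
apply: le_trans (ler_wpM2r _ (Prob_le1 _ hG0)) _; first by rewrite invr_ge0; lra.
rewrite mul1r; have [-> | k_gt0] := posnP k.
  have -> : Prob R G (fun g => (0 <= Xcount h m g)%N) = 1.
    by rewrite ProbE (@eq_mean _ _ _ _ (fun=> 1)) ?mean_cst.
  by rewrite invf_le1; lra.
have le_kmu : 2 * k%:R <= m%:R / N%:R :> R.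
  by rewrite ler_pdivlMr // -!natrM ler_nat.
have le_pred : (k.-1)%:R <= k%:R :> R by rewrite ler_nat leq_pred.
have le1k : 1 <= k%:R :> R by rewrite ler1n.
apply: (@inv_le_of_sqr_le _ (m%:R / N%:R) CG (k.-1)%:R).
- lra.
- lra.
- exact: ler0n.
- lra.
- by apply: tail => //; lra.
Qed.
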